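(* Let $n\geq 3$. Let $H$ be the $n!\times(n-1)^2$ $0/1$ matrix with rows indexed by $S(n)$, columns indexed by ordered pairs $(i,j)$ with $i,j\in\{1,\dots,n-1\}$, and $(\pi,(i,j))$-entry equal to $1$ iff $\pi(i)=j$. Let $N$ be the submatrix of $H$ formed by the rows indexed by derangements of $\{1,\dots,n\}$, and let $[N|\mathbf 1]$ be $N$ with an extra all-ones column appended. If $y$ (indexed by the columns of $H$ together with one extra coordinate for the appended column) satisfies $[N|\mathbf 1]y=0$, then there is a scalar $c$ such that $y_{(i,j)}=c$ for all $i\neq j$ in $\{1,\dots,n-1\}$ and the extra coordinate of $y$ equals $-(n-2)c$; i.e. the restriction of $y$ to the coordinates $(i,j)$ with $i\neq j$ together with the extra coordinate is a scalar multiple of $(1,1,\dots,1,-(n-2))$.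
   Context: A derangement of $\{1,\dots,n\}$ is a permutation with no fixed points; $S(n)$ is the symmetric group on $\{1,\dots,n\}$. *)

From HB Require Import structures.
From mathcomp Require Import all_boot all_order all_algebra all_fingroup.
Set Implicit Arguments. Unset Strict Implicit. Unset Printing Implicit Defensive.
Import Order.TTheory GRing.Theory Num.Theory.
Local Open Scope ring_scope.

(* {1,...,n} is modelled by 'I_n = {0,...,n-1}; the subset {1,...,n-1}
   (all points but the last one, n) is modelled by 'I_n.-1 embedded in 'I_n. *)
Definition emb (n : nat) (i : 'I_n.-1) : 'I_n := widen_ord (leq_pred n) i.

Definition derangement (n : nat) (s : 'S_n) : bool := [forall i, s i != i].

Definition Hentry (R : nzRingType) (n : nat) (s : 'S_n) (i j : 'I_n.-1) : R :=
  (s (emb i) == emb j)%:R.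

From HB Require Import structures.
From mathcomp Require Import all_boot all_order all_algebra all_fingroup.
Import Order.TTheory GRing.Theory Num.Theory.
Local Open Scope ring_scope.
Set Implicit Arguments. Unset Strict Implicit. Unset Printing Implicit Defensive.

(* Write n = m.+1, so that the points are 'I_m.+1, the last point is ord_max
   and the column indices (i,j) range over 'I_m x 'I_m.  Row i of a derangement
   s contributes y i j to [N|1] y when s i = j < m, and nothing when s i is the
   last point; the hypothesis says that these contributions add up to - y0 for
   every derangement.

   The proof compares derangements that differ by one transposition: if s and
   s' agree outside two points u, v, the total contributions of u and v agree.
   Choosing s as a single long cycle through prescribed points and s' as s
   followed by the transposition of two of its values, we get
   y i j = y x j (column constancy) and y i j = y i k (row constancy) for
   distinct indices.  For m >= 3 these connect all off-diagonal entries, and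
   for m = 2 the two off-diagonal entries are read off directly from the two
   3-cycles.  Finally, exactly one row of a derangement is mapped to the last
   point, so every derangement contributes (m - 1) c, whence y0 = - (n - 2) c. *)

Lemma next_neq (T : eqType) (c : seq T) x :
  uniq c -> (1 < size c)%N -> x \in c -> next c x != x.
Proof.
move=> uc sc /rot_to[i p ep].
have := rot_uniq i c; have := size_rot i c; rewrite -(next_rot i uc x) ep uc.
case: p {ep} => [|z p] /=; first by move=> e; rewrite -e in sc.
by rewrite eqxx inE negb_or eq_sym => _ /andP[/andP[]].
Qed.

Lemma cycle_derangement m (a : seq 'I_m.+1) : uniq a -> (1 < size a)%N ->
  exists s : 'S_m.+1, derangement s /\
    forall x, s x = next (a ++ [seq x <- enum 'I_m.+1 | x \notin a]) x.
Proof.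
move=> ua sa; set c := _ ++ _.
have uc : uniq c.
  rewrite cat_uniq ua filter_uniq ?enum_uniq // andbT.
  by apply/hasPn => x; rewrite mem_filter => /andP[].
have inj_next : injective (next c) := can_inj (prev_next uc).
exists (perm inj_next); split=> [|x]; last by rewrite permE.
apply/forallP => x; rewrite permE next_neq //.
  by rewrite size_cat (leq_trans sa) ?leq_addr.
by rewrite mem_cat mem_filter mem_enum andbT; case: (x \in a).
Qed.

Definition contrib (R : nzRingType) m (s : 'S_m.+1) (y : 'I_m -> 'I_m -> R)
  (i : 'I_m) : R := \sum_(j : 'I_m) Hentry R s i j * y i j.

Lemma emb_inj m : injective (@emb m.+1).
Proof. by move=> a b /(congr1 val) /= /val_inj. Qed.

Lemma emb_neq_max m (i : 'I_m) : @emb m.+1 i != ord_max.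
Proof. by rewrite -val_eqE /= neq_ltn ltn_ord. Qed.

Lemma emb_onto m (x : 'I_m.+1) : x != ord_max -> exists i : 'I_m, x = @emb m.+1 i.
Proof.
move=> xmax; have lt_xm : (x < m)%N.
  by move: (ltn_ord x) xmax; rewrite ltnS leq_eqVlt -val_eqE => /orP[->|].
by exists (Ordinal lt_xm); apply: val_inj.
Qed.

Lemma contrib_emb (R : nzRingType) m (s : 'S_m.+1) y i j :
  s (emb i) = emb j -> contrib s y i = y i j :> R.
Proof.
move=> sij; rewrite /contrib (bigD1 j) //= big1 ?addr0.
  by rewrite /Hentry sij eqxx mul1r.
by move=> k kj; rewrite /Hentry sij (inj_eq (@emb_inj m)) eq_sym (negbTE kj) mul0r.
Qed.

Lemma contrib_max (R : nzRingType) m (s : 'S_m.+1) y i :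
  s (emb i) = ord_max -> contrib s y i = 0 :> R.
Proof.
move=> si; rewrite /contrib big1 // => k _.
by rewrite /Hentry si eq_sym (negbTE (emb_neq_max k)) mul0r.
Qed.

Lemma sum_contrib_local (R : nzRingType) m (s s' : 'S_m.+1) (y : 'I_m -> 'I_m -> R) u v :
  u != v -> (forall w, w != u -> w != v -> s (emb w) = s' (emb w)) ->
  \sum_i contrib s y i - (contrib s y u + contrib s y v) =
  \sum_i contrib s' y i - (contrib s' y u + contrib s' y v).
Proof.
move=> uv agree.
have split_uv (t : 'S_m.+1) : \sum_i contrib t y i - (contrib t y u + contrib t y v)
    = \sum_(i | (i != u) && (i != v)) contrib t y i.
  rewrite (bigD1 u) // (bigD1 v) ?(eq_sym v) //= addrA [X in X - _]addrC addrK.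
  by apply: eq_bigl => i; rewrite andbC.
rewrite !split_uv; apply: eq_bigr => w /andP[wu wv].
by apply: eq_bigr => j _; rewrite /Hentry agree.
Qed.

Lemma derangement_swap m (s : 'S_m.+1) u v :
  derangement s -> s u != v -> s v != u -> u != v ->
  let s' := (s * tperm (s u) (s v))%g in
  [/\ derangement s', s' u = s v, s' v = s u
    & forall w, w != u -> w != v -> s' w = s w].
Proof.
move=> ds suv svu uv s'.
have s'u : s' u = s v by rewrite permM tpermL.
have s'v : s' v = s u by rewrite permM tpermR.
have s'w : forall w, w != u -> w != v -> s' w = s w.
  by move=> w wu wv; rewrite permM tpermD // (inj_eq perm_inj) eq_sym.
split=> //; apply/forallP => w.
have [->|wu] := eqVneq w u; first by rewrite s'u.
have [->|wv] := eqVneq w v; first by rewrite s'v.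
by rewrite s'w //; apply: (forallP ds).
Qed.

Section ConstantRowSums.

Variables (R : nzRingType) (m : nat) (y : 'I_m -> 'I_m -> R) (y0 : R).

(* The hypothesis [N|1] y = 0, row by row. *)
Hypothesis sum_contrib_deranged :
  forall s : 'S_m.+1, derangement s -> \sum_i contrib s y i = - y0.

Let emb_eq := inj_eq (@emb_inj m).

(* Column constancy: compare the cycle (x, last, i, j, ...) with the same cycle
   after swapping the values at i and x; rows i, x contribute y i j + 0 and
   0 + y x j respectively. *)
Lemma col_const i j x : i != j -> x != j -> i != x -> y i j = y x j.
Proof.
move=> ij xj ix.
have u4 : uniq [:: @emb m.+1 x; ord_max; @emb m.+1 i; @emb m.+1 j].
  by rewrite /= !inE !emb_eq ![ord_max == _]eq_sym !(negbTE (emb_neq_max _))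
             (eq_sym x i) (negbTE ix) (negbTE xj) ij.
have [s [ds def_s]] := cycle_derangement u4 isT.
have sx : s (@emb m.+1 x) = ord_max by rewrite def_s /= eqxx.
have si : s (@emb m.+1 i) = @emb m.+1 j.
  by rewrite def_s /= emb_eq (negbTE ix) (negbTE (emb_neq_max i)) eqxx.
have [||| ds' s'i s'x s'w] := derangement_swap ds (u := @emb m.+1 i) (v := @emb m.+1 x).
- by rewrite si emb_eq eq_sym.
- by rewrite sx eq_sym emb_neq_max.
- by rewrite emb_eq.
set s' := (s * _)%g in ds' s'i s'x s'w.
have agree w : w != i -> w != x -> s (@emb m.+1 w) = s' (@emb m.+1 w).
  by move=> wi wx; rewrite s'w // emb_eq.
have := sum_contrib_local y ix agree.
rewrite !sum_contrib_deranged // (contrib_emb y si) (contrib_max y sx).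
rewrite (contrib_max y (etrans s'i sx)) (contrib_emb y (etrans s'x si)) addr0 add0r.
by move/addrI/oppr_inj.
Qed.

(* Row constancy: compare the cycle (i, j, last, k, ...) with the same cycle
   after swapping the values at i and at the last point; row i contributes
   y i j before and y i k after, and all other rows keep their values. *)
Lemma row_const i j k : i != j -> i != k -> j != k -> y i j = y i k.
Proof.
move=> ij ik jk.
have u4 : uniq [:: @emb m.+1 i; @emb m.+1 j; ord_max; @emb m.+1 k].
  by rewrite /= !inE !emb_eq ![ord_max == _]eq_sym !(negbTE (emb_neq_max _))
             (negbTE ij) (negbTE ik) (negbTE jk).
have [s [ds def_s]] := cycle_derangement u4 isT.
have si : s (@emb m.+1 i) = @emb m.+1 j by rewrite def_s /= eqxx.
have smax : s ord_max = @emb m.+1 k.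
  by rewrite def_s /= ![ord_max == _]eq_sym !(negbTE (emb_neq_max _)) eqxx.
have [||| ds' s'i s'max s'w] := derangement_swap ds (u := @emb m.+1 i) (v := ord_max).
- by rewrite si emb_neq_max.
- by rewrite smax emb_eq eq_sym.
- by rewrite emb_neq_max.
set s' := (s * _)%g in ds' s'i s'max s'w.
have agree w : w != i -> s (@emb m.+1 w) = s' (@emb m.+1 w).
  by move=> wi; rewrite s'w // ?emb_eq ?emb_neq_max.
have := sum_contrib_local y ij (fun w wi _ => agree w wi).
rewrite !sum_contrib_deranged // (contrib_emb y si) (contrib_emb y (etrans s'i smax)).
have -> : contrib s' y j = contrib s y j.
  by apply: eq_bigr => l _; rewrite /Hentry agree // eq_sym.
by move/addrI/oppr_inj/addIr.
Qed.

(* For a constant off-diagonal y, each derangement contributes c from every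
   row except the unique one mapped to the last point. *)
Lemma sum_contrib_const c (s : 'S_m.+1) :
  (forall i j, i != j -> y i j = c) -> derangement s ->
  \sum_i contrib s y i = c *+ m.-1.
Proof.
move=> yc ds.
have [i0 si0] : exists i0 : 'I_m, s (@emb m.+1 i0) = ord_max.
  have [|i0 def_i0] := emb_onto (x := (s^-1)%g ord_max).
    by apply/eqP => e; move: (forallP ds ((s^-1)%g ord_max)); rewrite permKV e eqxx.
  by exists i0; rewrite -def_i0 permKV.
rewrite (bigD1 i0) //= (contrib_max y si0) add0r.
rewrite (eq_bigr (fun _ => c)) ?sumr_const ?cardC1 ?card_ord // => w wi0.
have [|j sj] := emb_onto (x := s (@emb m.+1 w)).
  by rewrite -si0 (inj_eq perm_inj) emb_eq.
rewrite (contrib_emb y sj) yc //; apply: contraNneq (forallP ds (@emb m.+1 w)).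
by move=> wj; rewrite sj wj.
Qed.

End ConstantRowSums.

(* For n = 3 the derangement i -> j -> last -> i has only row i contributing. *)
Lemma offdiag_three (R : nzRingType) (y : 'I_2 -> 'I_2 -> R) y0 :
  (forall s : 'S_3, derangement s -> \sum_i contrib s y i = - y0) ->
  forall i j, i != j -> y i j = - y0.
Proof.
move=> sum_contrib_deranged i j ij.
have emb_eq := inj_eq (@emb_inj 2).
have u3 : uniq [:: @emb 3 i; @emb 3 j; ord_max].
  by rewrite /= !inE !emb_eq !(negbTE (emb_neq_max _)) (negbTE ij).
have [s [ds def_s]] := cycle_derangement u3 isT.
have si : s (@emb 3 i) = @emb 3 j by rewrite def_s /= eqxx.
have sj : s (@emb 3 j) = ord_max by rewrite def_s /= emb_eq eq_sym (negbTE ij) eqxx.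
have only_ij w : (w != i) && (w != j) = false.
  by move: i j w ij {si sj def_s u3} => [[|[|?]] ?] [[|[|?]] ?] [[|[|?]] ?].
rewrite -(sum_contrib_deranged s ds) (bigD1 i) //= (bigD1 j) 1?eq_sym //=.
by rewrite big_pred0 // (contrib_emb y si) (contrib_max y sj) !addr0.
Qed.

Lemma offdiag_const (R : nzRingType) m (y : 'I_m -> 'I_m -> R) y0 : (1 < m)%N ->
  (forall s : 'S_m.+1, derangement s -> \sum_i contrib s y i = - y0) ->
  exists c, forall i j, i != j -> y i j = c.
Proof.
case: m y => [|[|[|k]]] // y _ sum_contrib_deranged.
  by exists (- y0); apply: offdiag_three.
have col := col_const sum_contrib_deranged.
have row := row_const sum_contrib_deranged.
pose o1 : 'I_k.+3 := @Ordinal k.+3 1 isT.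
pose o2 : 'I_k.+3 := @Ordinal k.+3 2 isT.
exists (y ord0 o1).
have row0 j : j != ord0 -> y ord0 j = y ord0 o1.
  by move=> j0; have [->|j1] := eqVneq j o1; last by rewrite (row _ o1 j) // eq_sym.
move=> i j ij; have [i0|i0] := eqVneq i ord0; first by rewrite i0 row0 // eq_sym -i0.
have [j0|j0] := eqVneq j ord0; last by rewrite (col _ _ ord0) ?row0 // eq_sym.
(* entry (i, 0): move along row i to a third index k', then up to row 0 *)
pose k' := if i == o1 then o2 else o1.
have k'0 : k' != ord0 by rewrite /k'; case: ifP.
have ik' : i != k' by rewrite /k'; case: ifP => [/eqP ->|/negbT].
rewrite j0 (row _ _ k' i0 ik'); last by rewrite eq_sym.
by rewrite (col _ _ ord0 ik' _ i0) ?row0 // eq_sym.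
Qed.

Theorem lemma12 (R : realFieldType) (n : nat) (hn : (3 <= n)%N)
    (y : 'I_n.-1 -> 'I_n.-1 -> R) (y0 : R) :
  (forall s : 'S_n, derangement s ->
     \sum_(i : 'I_n.-1) \sum_(j : 'I_n.-1) Hentry R s i j * y i j + y0 = 0) ->
  exists c : R, (forall i j : 'I_n.-1, i != j -> y i j = c) /\
                y0 = - ((n - 2)%:R * c).
Proof.
case: n hn y => [|m] // hn y Ny.
have sum_contrib_deranged (s : 'S_m.+1) : derangement s -> \sum_i contrib s y i = - y0.
  by move=> ds; apply/eqP; rewrite -addr_eq0; apply/eqP; exact: Ny.
have [c yc] := offdiag_const hn sum_contrib_deranged.
exists c; split=> //.
have u2 : uniq [:: ord0; @ord_max m] by rewrite /= inE -val_eqE /= eq_sym -lt0n ltnW.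
have [s [ds _]] := cycle_derangement u2 isT.
rewrite -[y0]opprK -(sum_contrib_deranged s ds) (sum_contrib_const yc ds).
by rewrite mulr_natl subSS subn1.
Qed.
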